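(* Let $\Omega\subset\mathbb{R}^d$ ($d=2,3$) be a bounded domain, $H=L_2(\Omega)$ with inner product $(u,v)=\int_\Omega u v\,dx$ and norm $\|u\|=(u,u)^{1/2}$, and $\boldsymbol H=(L_2(\Omega))^d$. Let $\mu,\lambda,\alpha,k,\nu$ be constants and $S\ge 0$ a constant. Consider the operators $$\mathcal{A}\boldsymbol v=-\mu\nabla^2\boldsymbol v-(\lambda+\mu)\,\mathrm{grad}\,\mathrm{div}\,\boldsymbol v \ \text{ in } \boldsymbol H,\qquad \mathcal{B}p=-\mathrm{div}\Big(\frac{k}{\nu}\,\mathrm{grad}\,p\Big)\ \text{ in } H,$$ where $\mathcal{A}$ is self-adjoint and nonnegative in $\boldsymbol H$ and $\mathcal{B}$ is self-adjoint and positive in $H$, and let $\mathcal{G}$ (gradient) and $\mathcal{D}$ (divergence) satisfy $(\mathcal{G}p,\boldsymbol u)=-(\mathcal{D}\boldsymbol u,p)$ for all $p,\boldsymbol u$. Let $(\boldsymbol u(t),p(t))$ be a solution of $$\mathcal{A}\boldsymbol u+\alpha\mathcal{G}p=0,\qquad \frac{d}{dt}\big(S\,p+\alpha\mathcal{D}\boldsymbol u\big)+\mathcal{B}p=f(t),\quad t>0,$$ with $p(0)=p_0$. Then for all $t>0$, $$\|\boldsymbol u(t)\|_{\mathcal{A}}^2+S\|p(t)\|^2\le \|\boldsymbol u(0)\|_{\mathcal{A}}^2+S\|p(0)\|^2+\frac12\int_0^t\|f(s)\|^2_{\mathcal{B}^{-1}}\,ds.$$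
   Context: This is the operator form of the linear poroelasticity (Biot) system: $\boldsymbol u$ is the displacement, $p$ the fluid pressure, $S=1/M$ with $M$ the Biot modulus, $k$ the permeability, $\nu$ the fluid viscosity, $\alpha$ the Biot–Willis coupling coefficient, $f$ a source term. The operators act on functions satisfying the homogeneous boundary conditions of the problem. Norms: $\|\boldsymbol u\|_{\mathcal{A}}=(\mathcal{A}\boldsymbol u,\boldsymbol u)^{1/2}$, $\|f\|_{\mathcal{B}^{-1}}=(\mathcal{B}^{-1}f,f)^{1/2}$. *)

From HB Require Import structures.
From mathcomp Require Import all_boot all_order all_algebra.
From mathcomp Require Import all_classical all_reals all_analysis.
Set Implicit Arguments. Unset Strict Implicit. Unset Printing Implicit Defensive.
Import Order.TTheory GRing.Theory Num.Theory.
Import numFieldNormedType.Exports.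
Local Open Scope ring_scope.

Definition is_inner_product (R : realType) (V : normedModType R)
    (ip : V -> V -> R) : Prop :=
  (forall (a : R) (x y z : V), ip (a *: x + y) z = a * ip x z + ip y z) /\
  (forall x y : V, ip x y = ip y x) /\
  (forall x : V, ip x x = `|x| ^+ 2).

Definition op_sqnorm (R : realType) (V : normedModType R)
    (ip : V -> V -> R) (A : V -> V) (u : V) : R := ip (A u) u.

Definition selfadjoint (R : realType) (V : normedModType R)
    (ip : V -> V -> R) (A : V -> V) : Prop :=
  forall x y : V, ip (A x) y = ip x (A y).

Definition nonneg_op (R : realType) (V : normedModType R)
    (ip : V -> V -> R) (A : V -> V) : Prop :=
  forall x : V, 0 <= ip (A x) x.

Definition positive_op (R : realType) (V : normedModType R)
    (ip : V -> V -> R) (A : V -> V) : Prop :=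
  forall x : V, x != 0 -> 0 < ip (A x) x.

From HB Require Import structures.
From mathcomp Require Import all_boot all_order all_algebra.
From mathcomp Require Import all_classical all_reals all_analysis.
From mathcomp Require Import ring lra.
Import Order.TTheory GRing.Theory Num.Theory.
Import numFieldNormedType.Exports.
Local Open Scope classical_set_scope.
Local Open Scope ring_scope.
Set Implicit Arguments. Unset Strict Implicit.

(* Energy method.  Put E = |u|_A^2 + S |p|^2 and w = S p + alpha D u.  Since
   alpha G p = - A u, the adjointness (G p, v) = - (D v, p) and the symmetry of A
   give E(a) - E(b) = (w(a) - w(b), p(a) + p(b)), hence E' = 2 (w', p)
   = 2 (f - B p, p).  Expanding (B r, r) >= 0 at r = p - B^-1 f / 2 bounds this
   by (B^-1 f, f) / 2, and integrating from 0 to t, E being continuous up to 0,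
   gives the estimate. *)

Section InnerProduct.
Variables (R : realType) (V : normedModType R) (ip : V -> V -> R).
Hypothesis ip_inner : is_inner_product ip.

Lemma ipC x y : ip x y = ip y x.
Proof. by case: ip_inner => _ []. Qed.

Lemma ip0l z : ip 0 z = 0.
Proof.
case: ip_inner => linl _; have := linl 1 0 0 z.
by rewrite scaler0 addr0 mul1r => /(congr1 (fun r => r - ip 0 z)); rewrite addrK subrr.
Qed.

Lemma ipDl x y z : ip (x + y) z = ip x z + ip y z.
Proof. by case: ip_inner => linl _; rewrite -[x]scale1r linl mul1r scale1r. Qed.

Lemma ipZl a x z : ip (a *: x) z = a * ip x z.
Proof. by case: ip_inner => linl _; rewrite -[a *: x]addr0 linl ip0l addr0. Qed.

Lemma ipNl x z : ip (- x) z = - ip x z.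
Proof. by rewrite -scaleN1r ipZl mulN1r. Qed.

Lemma ipBl x y z : ip (x - y) z = ip x z - ip y z.
Proof. by rewrite ipDl ipNl. Qed.

Lemma ipDr x y z : ip z (x + y) = ip z x + ip z y.
Proof. by rewrite ipC ipDl !(ipC _ z). Qed.

Lemma ipZr a x z : ip z (a *: x) = a * ip z x.
Proof. by rewrite ipC ipZl ipC. Qed.

Lemma ipBr x y z : ip z (x - y) = ip z x - ip z y.
Proof. by rewrite ipC ipBl !(ipC _ z). Qed.

Lemma ip_polar x y : ip x y = (`|x + y| ^+ 2 - `|x - y| ^+ 2) / 4.
Proof.
case: ip_inner => _ [_ ipxx].
by rewrite -!ipxx ipDl ipBl !ipBr !ipDr (ipC y x); field.
Qed.

Lemma cvg_ip T (F : set_system T) (FF : Filter F) (a b : T -> V) a0 b0 :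
  a @ F --> a0 -> b @ F --> b0 -> (fun t => ip (a t) (b t)) @ F --> ip a0 b0.
Proof.
move=> aa0 bb0; rewrite ip_polar (funext (fun t => ip_polar (a t) (b t))).
apply: cvgMr_tmp; apply: cvgB; rewrite !expr2; apply: cvgM;
  apply: cvg_norm; (apply: cvgD || apply: cvgB) => //; exact: cvgN.
Qed.

Lemma is_derive_ip_increment (w q : R -> V) (E : R -> R) (c : R) :
  (\forall a \near c, E a - E c = ip (w a - w c) (q a + q c)) ->
  derivable w c 1 -> {for c, continuous q} ->
  is_derive c 1 E (2 * ip ('D_1 w c) (q c)).
Proof.
move=> Einc dw cq.
have quotE : {near 0^', (fun h => ip (h^-1 *: (w (h *: 1 + c) - w c)) (q (h + c) + q c))
    =1 (fun h => h^-1 *: (E (h *: 1 + c) - E c))}.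
  have : \forall h \near 0^', E (h + c) - E c = ip (w (h + c) - w c) (q (h + c) + q c).
    by apply: nbhs_dnbhs; move: Einc; rewrite (near_shift 0 c) subr0.
  apply: filterS => h /= Eh.
  by rewrite [h *: 1]mulr1 Eh ipZl.
have lim : (fun h => h^-1 *: (E (h *: 1 + c) - E c)) @ 0^' --> 2 * ip ('D_1 w c) (q c).
  apply: cvg_trans (near_eq_cvg quotE) _.
  rewrite -[2]/(1 + 1) mulrDl mul1r -ipDr.
  apply: cvg_ip; first exact: dw.
  by apply: cvgD; [exact/continuous_withinNshiftx | exact: cvg_cst].
apply: DeriveDef; first exact: cvgP lim.
exact: cvg_lim lim.
Qed.

End InnerProduct.

Lemma derive1_ler_Rintegral (R : realType) (E g : R -> R) (a t : R) : a <= t ->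
  {within `[a, t], continuous E} -> {within `[a, t], continuous g} ->
  (forall x, x \in `]a, t[ -> derivable E x 1 /\ derive1 E x <= g x) ->
  E t <= E a + \int[lebesgue_measure]_(s in `[a, t]) g s.
Proof.
move=> le_at cE cg dE_le.
set Int := fun x => \int[lebesgue_measure]_(s in `[a, x]) g s.
have ig : lebesgue_measure.-integrable `[a, t] (EFin \o g).
  by apply: continuous_compact_integrable => //; exact: segment_compact.
have dInt x : x \in `]a, t[ -> derivable Int x 1 /\ derive1 Int x = g x.
  move=> /[dup] xat; rewrite in_itv /= => /andP[ax xt].
  apply: (continuous_FTC1_closed xt ig ax).
  exact: within_continuous_continuous (lt_trans ax xt) cg xat.
have cF : {within `[a, t], continuous (E - Int)}.
  move=> x; apply: cvgB; first exact: cE.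
  exact: parameterized_integral_continuous le_at ig x.
have dF x : x \in `]a, t[ -> derivable (E - Int) x 1.
  by move=> xat; apply: derivableB; [exact: (dE_le x xat).1 | exact: (dInt x xat).1].
have dF_le0 x : x \in `]a, t[ -> derive1 (E - Int) x <= 0.
  move=> xat; have [dEx Eg] := dE_le x xat; have [dIx Ix] := dInt x xat.
  by rewrite derive1E deriveB // -!derive1E Ix subr_le0.
have := ler0_derive1_le_cc dF dF_le0 cF.
move=> /(_ t a); rewrite !in_itv /= !lexx le_at => /(_ isT isT isT).
by rewrite !fctE /Int set_itv1 Rintegral_set1 subr0 lerBlDr addrC.
Qed.

Section OperatorInequalities.
Variables (R : realType) (W : normedModType R) (ip : W -> W -> R).
Hypothesis ip_inner : is_inner_product ip.
Variable B : {linear W -> W}.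

Lemma positive_op_nonneg : positive_op ip B -> nonneg_op ip B.
Proof.
move=> Bpos q; have [->|q0] := eqVneq q 0; last exact/ltW/Bpos.
by rewrite linear0 (ip0l ip_inner).
Qed.

Lemma ip_sub_op_le_op_sqnorm_inv (Binv : W -> W) (g q : W) :
  selfadjoint ip B -> nonneg_op ip B -> B (Binv g) = g ->
  2 * ip (g - B q) q <= 2^-1 * op_sqnorm ip Binv g.
Proof.
move=> Bsa Bnneg BBinv; rewrite /op_sqnorm -{1 3}BBinv.
have := Bnneg (q - 2^-1 *: Binv g).
rewrite linearB linearZ /= !(ipBl ip_inner) !(ipBr ip_inner) !(ipZl ip_inner).
rewrite !(ipZr ip_inner) (Bsa (Binv g) q).
rewrite (ipC ip_inner (Binv g) (B q)) (ipC ip_inner (Binv g) (B (Binv g))).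
lra.
Qed.

End OperatorInequalities.

Section BiotSystem.
Variables (R : realType) (V W : normedModType R).
Variables (ipV : V -> V -> R) (ipW : W -> W -> R).
Hypotheses (ipV_inner : is_inner_product ipV) (ipW_inner : is_inner_product ipW).
Variables (A : {linear V -> V}) (B : {linear W -> W}) (Binv : W -> W).
Variables (G : {linear W -> V}) (D : {linear V -> W}) (alpha S : R).
Hypothesis A_selfadjoint : selfadjoint ipV A.
Hypothesis GD_adjoint : forall (q : W) (v : V), ipV (G q) v = - ipW (D v) q.

Lemma biot_energy_increment (u1 u2 : V) (p1 p2 : W) :
  A u1 + alpha *: G p1 = 0 -> A u2 + alpha *: G p2 = 0 ->
  op_sqnorm ipV A u1 + S * ipW p1 p1 - (op_sqnorm ipV A u2 + S * ipW p2 p2) =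
  ipW (S *: p1 + alpha *: D u1 - (S *: p2 + alpha *: D u2)) (p1 + p2).
Proof.
move=> eq1 eq2; rewrite /op_sqnorm.
have GpE u p : A u + alpha *: G p = 0 -> alpha *: G p = - A u.
  by move=> eq; apply/eqP; rewrite -addr_eq0 addrC eq.
have -> : S *: p1 + alpha *: D u1 - (S *: p2 + alpha *: D u2) =
    S *: (p1 - p2) + alpha *: D (u1 - u2).
  by rewrite [D (_ - _)]linearB /= !scalerBr opprD addrACA.
have DG q v : ipW (D v) q = - ipV (G q) v by rewrite GD_adjoint opprK.
rewrite (ipDl ipW_inner) !(ipZl ipW_inner) DG [G (_ + _)]linearD /= (ipDl ipV_inner).
rewrite mulrN mulrDr -!(ipZl ipV_inner) (GpE _ _ eq1) (GpE _ _ eq2).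
rewrite !(ipNl ipV_inner) !(ipBr ipV_inner) !(ipBl ipW_inner) !(ipDr ipW_inner).
rewrite (ipC ipW_inner p2 p1) (A_selfadjoint u1 u2) (ipC ipV_inner u1 (A u2)).
lra.
Qed.

Variables (u : R -> V) (p f : R -> W).
Let w s := S *: p s + alpha *: D (u s).
Let E s := op_sqnorm ipV A (u s) + S * ipW (p s) (p s).

Lemma biot_energy_continuous (X : set R) :
  {within X, continuous u} -> {within X, continuous p} ->
  {within X, continuous (fun s => A (u s))} -> {within X, continuous E}.
Proof.
move=> cu cp cAu x; apply: cvgD.
  by apply: (cvg_ip ipV_inner); [exact: cAu | exact: cu].
by apply: cvgMl_tmp; apply: (cvg_ip ipW_inner); exact: cp.
Qed.

Hypothesis B_selfadjoint : selfadjoint ipW B.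
Hypothesis B_positive : positive_op ipW B.
Hypothesis B_Binv : forall g : W, B (Binv g) = g.
Hypothesis mechanics : forall t : R, 0 < t -> A (u t) + alpha *: G (p t) = 0.
Hypothesis flow :
  forall t : R, 0 < t -> derivable w t 1 /\ derive1 w t + B (p t) = f t.

Lemma is_derive_biot_energy (x : R) : 0 < x -> derivable p x 1 ->
  is_derive x 1 E (2 * ipW ('D_1 w x) (p x)).
Proof.
move=> x_gt0 dp; apply: (is_derive_ip_increment ipW_inner).
- near=> a; apply: biot_energy_increment; last exact: mechanics.
  by apply: mechanics; near: a; exact: lt_nbhsr.
- by case: (flow x_gt0).
- exact/differentiable_continuous/derivable1_diffP.
Unshelve. all: by end_near.
Qed.

Lemma derive1_biot_energy_le (x : R) : 0 < x -> derivable p x 1 ->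
  derivable E x 1 /\ derive1 E x <= 2^-1 * op_sqnorm ipW Binv (f x).
Proof.
move=> x_gt0 dp; have dE := is_derive_biot_energy x_gt0 dp.
split; first exact: ex_derive.
rewrite derive1E derive_val.
have [_ <-] := flow x_gt0; rewrite derive1E.
have := ip_sub_op_le_op_sqnorm_inv ipW_inner (p x) B_selfadjoint
  (positive_op_nonneg ipW_inner B_positive) (B_Binv ('D_1 w x + B (p x))).
by rewrite addrK.
Qed.

End BiotSystem.

Theorem theorem1 (R : realType)
  (V W : normedModType R) (ipV : V -> V -> R) (ipW : W -> W -> R)
  (A : {linear V -> V}) (B : {linear W -> W}) (Binv : W -> W)
  (G : {linear W -> V}) (D : {linear V -> W})
  (alpha S : R)
  (u : R -> V) (p : R -> W) (f : R -> W) :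
  is_inner_product ipV -> is_inner_product ipW ->
  selfadjoint ipV A -> nonneg_op ipV A ->
  selfadjoint ipW B -> positive_op ipW B ->
  (forall g : W, B (Binv g) = g) -> (forall q : W, Binv (B q) = q) ->
  (forall (q : W) (v : V), ipV (G q) v = - ipW (D v) q) ->
  0 <= S ->
  (* regularity of the solution and of the data *)
  (forall t : R, 0 < t -> derivable u t 1 /\ derivable p t 1) ->
  {within `[0, +oo[, continuous u} ->
  {within `[0, +oo[, continuous p} ->
  {within `[0, +oo[, continuous (fun t => A (u t))} ->
  {within `[0, +oo[, continuous (fun s => op_sqnorm ipW Binv (f s))} ->
  (* the equations *)
  (forall t : R, 0 < t -> A (u t) + alpha *: G (p t) = 0) ->
  (forall t : R, 0 < t ->
     derivable (fun s => S *: p s + alpha *: D (u s)) t 1 /\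
     derive1 (fun s => S *: p s + alpha *: D (u s)) t + B (p t) = f t) ->
  forall t : R, 0 < t ->
    ((op_sqnorm ipV A (u t) + S * ipW (p t) (p t))%:E <=
     (op_sqnorm ipV A (u 0) + S * ipW (p 0) (p 0))%:E
     + (2^-1)%:E * \int[lebesgue_measure]_(s in `[0%R, t]%classic) (op_sqnorm ipW Binv (f s))%:E)%E.
Proof.
move=> ipV_inner ipW_inner A_sa _ B_sa B_pos B_Binv _ GD_adj _ uv_der cu cp cAu ch.
move=> mechanics flow t t_gt0.
have sub0t : `[0, t] `<=` `[0, +oo[.
  by move=> x /=; rewrite !in_itv /= => /andP[-> _].
have ih : lebesgue_measure.-integrable `[0, t]
    (EFin \o fun s => op_sqnorm ipW Binv (f s)).
  apply: continuous_compact_integrable; first exact: segment_compact.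
  exact: continuous_subspaceW sub0t ch.
rewrite -[X in (_ + _ * X)%E]fineK; last exact: integrable_fin_num.
rewrite -EFinM -EFinD lee_fin -/(Rintegral _ _ _) -RintegralZl //.
apply: (derive1_ler_Rintegral
  (E := fun s => op_sqnorm ipV A (u s) + S * ipW (p s) (p s))
  (g := fun s => 2^-1 * op_sqnorm ipW Binv (f s)) (ltW t_gt0)).
- apply: continuous_subspaceW sub0t _.
  exact: (@biot_energy_continuous _ _ _ _ _ ipV_inner ipW_inner A S _ _ _ cu cp cAu).
- by apply: continuous_subspaceW sub0t _ => x; apply: cvgMl_tmp; exact: ch.
- move=> x; rewrite in_itv /= => /andP[x_gt0 _].
  apply: (derive1_biot_energy_le ipV_inner ipW_inner A_sa GD_adj B_sa B_pos B_Binv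
    mechanics flow x_gt0).
  exact: (uv_der x x_gt0).2.
Qed.
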